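(* Let $\beta\in(0,1)$, $n\ge1$, and $\mathbf{x}_0,\mathbf{x}_1,\dots,\mathbf{x}_n\in\mathbb{R}^d$. Let $q_{n,s}:=\beta^{n-s}\frac{1-\beta}{1-\beta^n}$ ($s=1,\dots,n$), let $\mathbf{X}_n$ be the random vector equal to $\mathbf{x}_s$ with probability $q_{n,s}$, and $\overline{\mathbf{x}}_n:=\mathbb{E}[\mathbf{X}_n]$. Then $$\mathbb{E}_{\mathbf{X}_n}\|\mathbf{X}_n-\overline{\mathbf{x}}_n\|^2\le2\sum_{t=1}^n\lambda_{n,t}\|\mathbf{x}_t-\mathbf{x}_{t-1}\|^2,\qquad\text{where }\lambda_{n,t}:=\sum_{i=t}^n\sum_{j=1}^{t-1}q_{n,i}q_{n,j}(i-j).$$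
   Context: Norms are Euclidean. An empty sum equals $0$. *)

From mathcomp Require Import all_boot all_order all_algebra.
Set Implicit Arguments. Unset Strict Implicit. Unset Printing Implicit Defensive.
Import Order.TTheory GRing.Theory Num.Theory.
Local Open Scope ring_scope.

Definition sqnorm (R : realFieldType) (d : nat) (v : 'rV[R]_d) : R :=
  \sum_(i < d) (v 0 i) ^+ 2.

Definition qw (R : realFieldType) (beta : R) (n s : nat) : R :=
  beta ^+ (n - s) * (1 - beta) / (1 - beta ^+ n).

Definition xbar (R : realFieldType) (d : nat) (beta : R) (n : nat)
  (x : nat -> 'rV[R]_d) : 'rV[R]_d :=
  \sum_(1 <= s < n.+1) qw beta n s *: x s.

Definition variance (R : realFieldType) (d : nat) (beta : R) (n : nat)
  (x : nat -> 'rV[R]_d) : R :=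
  \sum_(1 <= s < n.+1) qw beta n s * sqnorm (x s - xbar beta n x).

Definition lam (R : realFieldType) (beta : R) (n t : nat) : R :=
  \sum_(t <= i < n.+1) \sum_(1 <= j < t)
     qw beta n i * qw beta n j * (i%:R - j%:R).

From mathcomp Require Import all_boot all_order all_algebra.
From mathcomp Require Import ring lra.
Set Implicit Arguments. Unset Strict Implicit. Unset Printing Implicit Defensive.
Import Order.TTheory GRing.Theory Num.Theory.
Local Open Scope ring_scope.

(* For nonnegative weights summing to one, twice the variance equals the
   weighted sum of the squared pairwise differences (y_i - y_j)^2.  For j < i,
   Cauchy-Schwarz along the telescoping sum y_i - y_j = sum_(j < t <= i)
   (y_t - y_(t-1)) gives (y_i - y_j)^2 <= (i - j) sum_(j < t <= i)
   (y_t - y_(t-1))^2, and exchanging the order of summation turns the weighted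
   sum of these bounds into sum_t lambda_t (y_t - y_(t-1))^2.  This proves the
   inequality without the factor 2; the vector case follows coordinatewise. *)

Section WeightedSums.
Variables (R : realFieldType) (I : Type) (r : seq I) (w : I -> R).

Lemma double_sum_sqr_sub (a : I -> R) :
  \sum_(i <- r) \sum_(j <- r) w i * w j * (a i - a j) ^+ 2 =
  2 * ((\sum_(i <- r) w i) * (\sum_(i <- r) w i * a i ^+ 2)
       - (\sum_(i <- r) w i * a i) ^+ 2).
Proof.
have expand i j : w i * w j * (a i - a j) ^+ 2 =
    w i * (w j * a j ^+ 2) + w i * a i ^+ 2 * w j
    - 2 * (w i * a i * (w j * a j)) by ring.
under eq_bigr do under eq_bigr do rewrite expand.
under eq_bigr do rewrite sumrB big_split -!mulr_sumr.
rewrite sumrB big_split /= -!mulr_sumr -!mulr_suml.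
ring.
Qed.

Lemma sqr_wsum_le (a : I -> R) : (forall i, 0 <= w i) ->
  (\sum_(i <- r) w i * a i) ^+ 2 <=
  (\sum_(i <- r) w i) * (\sum_(i <- r) w i * a i ^+ 2).
Proof.
move=> w_ge0; rewrite -subr_ge0 -(pmulr_rge0 _ (ltr0Sn R 1)) -double_sum_sqr_sub.
by do 2!(apply: sumr_ge0 => ? _); rewrite mulr_ge0 ?sqr_ge0 // mulr_ge0.
Qed.

Lemma wvariance_double_sum (a : I -> R) : \sum_(i <- r) w i = 1 ->
  let m := \sum_(i <- r) w i * a i in
  2 * \sum_(i <- r) w i * (a i - m) ^+ 2 =
  \sum_(i <- r) \sum_(j <- r) w i * w j * (a i - a j) ^+ 2.
Proof.
move=> w_sum1 m.
have centered : \sum_(i <- r) w i * (a i - m) = 0.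
  by under eq_bigr do rewrite mulrBr; rewrite sumrB -mulr_suml w_sum1 mul1r subrr.
have sub_m i j : a i - a j = (a i - m) - (a j - m) by rewrite opprB addrA subrK.
symmetry; under eq_bigr do under eq_bigr do rewrite sub_m.
by rewrite double_sum_sqr_sub centered w_sum1 mul1r expr0n subr0.
Qed.

End WeightedSums.

Section Increments.
Variables (R : realFieldType) (n : nat).

Lemma big_nat_between (F : nat -> R) (i j : nat) : (i <= n)%N ->
  \sum_(1 <= t < n.+1 | (j < t <= i)%N) F t = \sum_(j.+1 <= t < i.+1) F t.
Proof.
by move=> le_in; rewrite [RHS](big_nat_widenl _ 1) // [RHS](@big_nat_widen _ _ _ _ i.+1 n.+1).
Qed.

Lemma exchange_sum_between (F : nat -> nat -> R) (D : nat -> R) :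
  \sum_(1 <= i < n.+1) \sum_(1 <= j < n.+1)
     F i j * \sum_(1 <= t < n.+1 | (j < t <= i)%N) D t =
  \sum_(1 <= t < n.+1) (\sum_(t <= i < n.+1) \sum_(1 <= j < t) F i j) * D t.
Proof.
under eq_bigr do under eq_bigr do rewrite big_mkcond mulr_sumr.
under eq_bigr do rewrite exchange_big /=.
rewrite exchange_big /=; apply: eq_big_nat => t /andP[t_gt0 t_le_n].
rewrite [RHS]mulr_suml [RHS](big_nat_widenl _ 1) // [RHS]big_mkcond /=.
apply: eq_bigr => i _; case: (leqP t i) => _.
  rewrite mulr_suml (@big_nat_widen _ _ _ _ t n.+1) 1?ltnW // [RHS]big_mkcond /=.
  by apply: eq_bigr => j _; rewrite andbT; case: ifP; rewrite ?mulr0.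
by apply: big1 => j _; rewrite andbF mulr0.
Qed.

Variable y : nat -> R.

Lemma sqr_sub_le_increments (i j : nat) : (j <= i)%N ->
  (y i - y j) ^+ 2 <= (i - j)%:R * \sum_(j.+1 <= t < i.+1) (y t - y t.-1) ^+ 2.
Proof.
move=> le_ji.
have telescope : y i - y j = \sum_(j.+1 <= t < i.+1) 1 * (y t - y t.-1).
  by rewrite big_add1 /= -(telescope_sumr _ le_ji); under eq_bigr do rewrite mul1r.
have card : (i - j)%:R = \sum_(j.+1 <= t < i.+1) (1 : R).
  by rewrite sumr_const_nat subSS.
rewrite telescope card.
have := sqr_wsum_le (index_iota j.+1 i.+1) (fun t => y t - y t.-1) (fun _ => @ler01 R).
by under [X in _ <= _ * X -> _]eq_bigr do rewrite mul1r.
Qed.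

Lemma sqr_sub_le_between (i j : nat) : (i <= n)%N -> (j <= n)%N ->
  (y i - y j) ^+ 2 <=
    (i%:R - j%:R) * \sum_(1 <= t < n.+1 | (j < t <= i)%N) (y t - y t.-1) ^+ 2
  + (j%:R - i%:R) * \sum_(1 <= t < n.+1 | (i < t <= j)%N) (y t - y t.-1) ^+ 2.
Proof.
wlog le_ji : i j / (j <= i)%N => [hwlog le_in le_jn|].
  case: (leqP j i) => [le_ji | /ltnW le_ij]; first exact: hwlog.
  by rewrite -sqrrN opprB [X in _ <= X]addrC; apply: hwlog.
move=> le_in _; rewrite [X in _ + _ * X]big_pred0 ?mulr0 ?addr0; last first.
  move=> t; apply/negbTE/andP => -[lt_it le_tj].
  by have := leq_ltn_trans (leq_trans le_tj le_ji) lt_it; rewrite ltnn.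
rewrite big_nat_between // -natrB //; exact: sqr_sub_le_increments.
Qed.

End Increments.

Section WeightedVariance.
Variables (R : realFieldType) (n : nat) (w : nat -> R).

Definition wlam (t : nat) : R :=
  \sum_(t <= i < n.+1) \sum_(1 <= j < t) w i * w j * (i%:R - j%:R).

Hypotheses (w_ge0 : forall s, 0 <= w s) (w_sum1 : \sum_(1 <= s < n.+1) w s = 1).

Lemma wvariance_le_wlam (y : nat -> R) :
  \sum_(1 <= s < n.+1) w s * (y s - \sum_(1 <= j < n.+1) w j * y j) ^+ 2 <=
  \sum_(1 <= t < n.+1) wlam t * (y t - y t.-1) ^+ 2.
Proof.
pose steps i j := \sum_(1 <= t < n.+1 | (j < t <= i)%N) (y t - y t.-1) ^+ 2.
pose B i j := w i * w j * (i%:R - j%:R) * steps i j.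
have pairs_le : \sum_(1 <= i < n.+1) \sum_(1 <= j < n.+1) w i * w j * (y i - y j) ^+ 2
    <= \sum_(1 <= i < n.+1) \sum_(1 <= j < n.+1) (B i j + B j i).
  apply: ler_sum_nat => i /andP[_ le_in]; apply: ler_sum_nat => j /andP[_ le_jn].
  rewrite /B -[w j * w i]mulrC -!mulrA -mulrDr ler_wpM2l ?w_ge0 // -mulrDr.
  by rewrite ler_wpM2l ?w_ge0 // sqr_sub_le_between.
have symmetrize : \sum_(1 <= i < n.+1) \sum_(1 <= j < n.+1) (B i j + B j i)
    = 2 * \sum_(1 <= i < n.+1) \sum_(1 <= j < n.+1) B i j.
  under eq_bigr do rewrite big_split /=.
  by rewrite big_split /= [X in _ + X]exchange_big mulr_natl mulr2n.
have rearrange : \sum_(1 <= i < n.+1) \sum_(1 <= j < n.+1) B i j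
    = \sum_(1 <= t < n.+1) wlam t * (y t - y t.-1) ^+ 2.
  exact: exchange_sum_between.
rewrite -(ler_pM2l (ltr0Sn R 1)) wvariance_double_sum // -rearrange -symmetrize.
exact: pairs_le.
Qed.

End WeightedVariance.

Lemma geometric_sum_rev (R : pzRingType) (b : R) (n : nat) :
  (1 - b) * \sum_(1 <= s < n.+1) b ^+ (n - s) = 1 - b ^+ n.
Proof.
have -> : \sum_(1 <= s < n.+1) b ^+ (n - s) = \sum_(i < n) b ^+ i.
  by rewrite big_add1 /= -(big_mkord xpredT) [RHS](big_nat_rev _ 0) add0n.
by rewrite -[RHS]opprB subrX1 -mulNr opprB.
Qed.

Section GeometricWeights.
Variables (R : realFieldType) (beta : R) (n : nat).
Hypotheses (beta_gt0 : 0 < beta) (beta_lt1 : beta < 1).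

Lemma qw_ge0 (s : nat) : 0 <= qw beta n s.
Proof.
have [beta_ge0 beta_le1] := (ltW beta_gt0, ltW beta_lt1).
by rewrite /qw divr_ge0 ?mulr_ge0 ?exprn_ge0 ?subr_ge0 ?exprn_ile1.
Qed.

Lemma qw_sum1 : (0 < n)%N -> \sum_(1 <= s < n.+1) qw beta n s = 1.
Proof.
move=> n_gt0; rewrite /qw -mulr_suml -mulr_suml [_ * (1 - beta)]mulrC.
rewrite geometric_sum_rev divff //.
by rewrite subr_eq0 eq_sym lt_eqF // exprn_ilt1 ?ltW // -lt0n.
Qed.

End GeometricWeights.

Section Coordinates.
Variables (R : realFieldType) (d n : nat) (w : nat -> R) (x : nat -> 'rV[R]_d).

Lemma wvariance_coord :
  \sum_(1 <= s < n.+1) w s * sqnorm (x s - \sum_(1 <= j < n.+1) w j *: x j) =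
  \sum_(k < d) \sum_(1 <= s < n.+1) w s * (x s 0 k - \sum_(1 <= j < n.+1) w j * x j 0 k) ^+ 2.
Proof.
rewrite exchange_big /=; apply: eq_bigr => s _; rewrite mulr_sumr; apply: eq_bigr => k _.
by rewrite !mxE summxE; congr (_ * (_ - _) ^+ 2); apply: eq_bigr => j _; rewrite mxE.
Qed.

Lemma sum_sqnorm_coord (c : nat -> R) :
  \sum_(1 <= t < n.+1) c t * sqnorm (x t - x t.-1) =
  \sum_(k < d) \sum_(1 <= t < n.+1) c t * (x t 0 k - x t.-1 0 k) ^+ 2.
Proof.
rewrite exchange_big /=; apply: eq_bigr => t _; rewrite mulr_sumr.
by apply: eq_bigr => k _; rewrite !mxE.
Qed.

End Coordinates.

Theorem proposition4 (R : realFieldType) (d : nat) (beta : R) (n : nat)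
  (x : nat -> 'rV[R]_d) :
  0 < beta -> beta < 1 -> (1 <= n)%N ->
  variance beta n x <=
    2 * \sum_(1 <= t < n.+1) lam beta n t * sqnorm (x t - x t.-1).
Proof.
move=> beta_gt0 beta_lt1 n_gt0.
have variance_le : variance beta n x <=
    \sum_(1 <= t < n.+1) lam beta n t * sqnorm (x t - x t.-1).
  rewrite /variance /xbar wvariance_coord sum_sqnorm_coord.
  apply: ler_sum => k _; apply: wvariance_le_wlam; first exact: qw_ge0.
  exact: qw_sum1.
have variance_ge0 : 0 <= variance beta n x.
  by apply: sumr_ge0 => s _; rewrite mulr_ge0 ?qw_ge0 // sumr_ge0 // => k _; exact: sqr_ge0.
lra.
Qed.
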